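(* Let $\mathcal A$ be a super weakly amenable Banach algebra. Then (i) the linear span of $\{ab:a,b\in\mathcal A\}$ is dense in $\mathcal A$; and (ii) there are no nonzero continuous point derivations on $\mathcal A$: for every nonzero continuous multiplicative linear functional $\varphi:\mathcal A\to\mathbb C$, every continuous linear functional $d:\mathcal A\to\mathbb C$ with $d(ab)=d(a)\varphi(b)+\varphi(a)d(b)$ for all $a,b\in\mathcal A$ is zero.
   Context: For a continuous homomorphism $\varphi:\mathcal A\to\mathcal B$ of Banach algebras, $\mathcal B_\varphi$ is $\mathcal B$ as an $\mathcal A$-bimodule with $a\cdot b=\varphi(a)b$, $b\cdot a=b\varphi(a)$, and its dual $\mathcal B_\varphi^*$ is an $\mathcal A$-bimodule via $\langle x,a\cdot f\rangle=\langle x\cdot a,f\rangle$, $\langle x,f\cdot a\rangle=\langle a\cdot x,f\rangle$. A derivation $d:\mathcal A\to X$ is a bounded linear map with $d(ab)=d(a)\cdot b+a\cdot d(b)$. $\mathcal A$ is called super weakly amenable if for every Banach algebra $\mathcal B$, every continuous homomorphism $\varphi:\mathcal A\to\mathcal B$ and every derivation $d:\mathcal A\to\mathcal B_\varphi^*$, one has $\langle d(a),\varphi(b)\rangle+\langle d(b),\varphi(a)\rangle=0$ for all $a,b\in\mathcal A$. *)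

From mathcomp Require Import all_boot all_order all_algebra complex.
From mathcomp Require Import all_classical all_reals all_analysis.
Import GRing.Theory Num.Theory numFieldNormedType.Exports.

Set Implicit Arguments.
Unset Strict Implicit.
Unset Printing Implicit Defensive.

Local Open Scope ring_scope.
Local Open Scope classical_set_scope.

Record banachAlgebra (R : realType) := BanachAlgebra {
  ba_sort :> completeNormedModType R[i];
  ba_mul : ba_sort -> ba_sort -> ba_sort;
  ba_mulA : forall a b c, ba_mul a (ba_mul b c) = ba_mul (ba_mul a b) c;
  ba_mulDl : forall a b c, ba_mul (a + b) c = ba_mul a c + ba_mul b c;
  ba_mulDr : forall a b c, ba_mul a (b + c) = ba_mul a b + ba_mul a c;
  ba_mulZl : forall (k : R[i]) a b, ba_mul (k *: a) b = k *: ba_mul a b;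
  ba_mulZr : forall (k : R[i]) a b, ba_mul a (k *: b) = k *: ba_mul a b;
  ba_norm_mul : forall a b, `|ba_mul a b| <= `|a| * `|b|
}.

Arguments ba_mul {R} A a b : rename.

Definition cont_hom (R : realType) (A B : banachAlgebra R) (phi : A -> B) :=
  [/\ forall (k : R[i]) (a a' : A), phi (k *: a + a') = k *: phi a + phi a',
      forall a a' : A, phi (ba_mul A a a') = ba_mul B (phi a) (phi a')
    & continuous phi].

Definition cont_lin_functional (R : realType) (V : normedModType R[i])
    (f : V -> (R[i])^o) :=
  (forall (k : R[i]) (x y : V), f (k *: x + y) = k * f x + f y) /\
  continuous f.

(* A derivation d : A -> (B_phi)^dual, where d a is the functional d a : B -> C.
   - each d a lies in B^dual,
   - d is linear and bounded as a map A -> B^* (operator norm on B^dual),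
   - Leibniz rule for the dual module actions:
       <x, d(ab)> = <x, d(a).b> + <x, a.d(b)>
                  = <b.x, d(a)> + <x.a, d(b)>
                  = <phi(b) x, d(a)> + <x phi(a), d(b)>. *)
Definition dual_derivation (R : realType) (A B : banachAlgebra R)
    (phi : A -> B) (d : A -> B -> (R[i])^o) :=
  [/\ forall a : A, cont_lin_functional (d a),
      forall (k : R[i]) (a a' : A) (x : B), d (k *: a + a') x = k * d a x + d a' x,
      exists M : R[i], forall (a : A) (x : B), `|d a x| <= M * `|a| * `|x|
    & forall (a b : A) (x : B),
        d (ba_mul A a b) x = d a (ba_mul B (phi b) x) + d b (ba_mul B x (phi a))].

Definition super_weakly_amenable (R : realType) (A : banachAlgebra R) : Prop :=
  forall (B : banachAlgebra R) (phi : A -> B) (d : A -> B -> (R[i])^o),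
    cont_hom phi -> dual_derivation phi d ->
    forall a b : A, d a (phi b) + d b (phi a) = 0.

Definition lin_span (R : realType) (V : lmodType R[i]) (S : set V) : set V :=
  [set x | exists (n : nat) (c : 'I_n -> R[i]) (v : 'I_n -> V),
      (forall i, S (v i)) /\ x = \sum_(i < n) c i *: v i].

Definition ba_products (R : realType) (A : banachAlgebra R) : set A :=
  [set x | exists a b : A, x = ba_mul A a b].

Definition character (R : realType) (A : banachAlgebra R) (phi : A -> (R[i])^o) :=
  [/\ cont_lin_functional phi,
      forall a b : A, phi (ba_mul A a b) = phi a * phi b
    & exists a : A, phi a != 0].

Arguments ba_products {R} A _.

(* With B := A and phi := id, a pair of continuous functionals f, h such that
   f(ab) h(x) = f(a) h(bx) + f(b) h(xa) yields the derivation a |-> f(a) h(_)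
   into A^*, so super weak amenability forces f(a) h(a) = 0 for every a.
   (i) If the span of the products were not dense, Hahn-Banach would give a
   continuous functional F vanishing on all products with F(x0) <> 0; the pair
   (F, F) satisfies the identity trivially, whence F(x0)^2 = 0.
   (ii) For a point derivation d at a character phi, the pair (d, phi)
   satisfies the identity; choosing phi(a0) <> 0 gives d(a0) = 0 and then
   d(a) phi(a0) = -d(a0) phi(a) = 0.
   Hahn-Banach is obtained from Zorn's lemma applied to graphs of partial
   linear functionals dominated by a sublinear functional, over the reals,
   and then complexified. *)

From HB Require Import structures.
From mathcomp Require Import all_boot all_order all_algebra complex.
From mathcomp Require Import all_classical all_reals all_analysis.
From mathcomp Require Import ring lra.
Import Order.TTheory GRing.Theory Num.Theory numFieldNormedType.Exports.

Set Implicit Arguments.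
Unset Strict Implicit.
Unset Printing Implicit Defensive.

Local Open Scope ring_scope.
Local Open Scope classical_set_scope.

Section LinearGraph.
Variables (R : fieldType) (V : lmodType R).
Implicit Types (G : set (V * R)) (x y : V) (a b c r t : R).

Definition linear_graph G :=
  [/\ G (0, 0),
      forall x y a b, G (x, a) -> G (y, b) -> G (x + y, a + b),
      forall r x a, G (x, a) -> G (r *: x, r * a)
    & forall x a b, G (x, a) -> G (x, b) -> a = b].

Lemma linear_graphB G x y a b : linear_graph G ->
  G (x, a) -> G (y, b) -> G (x - y, a - b).
Proof.
case=> _ GD GZ _ Gxa Gyb.
by have := GD _ _ _ _ Gxa (GZ (-1) _ _ Gyb); rewrite scaleN1r mulN1r.
Qed.

Lemma linear_graph_bigcup (F : set (set (V * R))) :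
  F !=set0 -> total_on F subset -> (forall G, F G -> linear_graph G) ->
  linear_graph (\bigcup_(G in F) G).
Proof.
move=> [G0 FG0] Ftot Flin.
have common G1 G2 : F G1 -> F G2 ->
    exists2 G, F G & G1 `<=` G /\ G2 `<=` G.
  move=> FG1 FG2; have [G12|G21] := Ftot _ _ FG1 FG2.
    by exists G2 => //; split.
  by exists G1 => //; split.
split.
- by exists G0; have [] := Flin _ FG0.
- move=> x y a b [G1 FG1 G1x] [G2 FG2 G2y].
  have [G FG [G1G G2G]] := common _ _ FG1 FG2.
  have [_ GD _ _] := Flin _ FG.
  by exists G; [|exact: GD (G1G _ G1x) (G2G _ G2y)].
- move=> r x a [G FG Gx]; have [_ _ GZ _] := Flin _ FG.
  by exists G; [|exact: GZ].
- move=> x a b [G1 FG1 G1x] [G2 FG2 G2x].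
  have [G FG [G1G G2G]] := common _ _ FG1 FG2.
  by have [_ _ _ Gfun] := Flin _ FG; exact: Gfun (G1G _ G1x) (G2G _ G2x).
Qed.

Lemma linear_graph_zero (S : set V) : S 0 ->
  (forall x y, S x -> S y -> S (x + y)) -> (forall r x, S x -> S (r *: x)) ->
  linear_graph [set (z, 0) | z in S].
Proof.
move=> S0 SD SZ.
split=> [|_ _ _ _ [x Sx [<- <-]] [y Sy [<- <-]]|r _ _ [x Sx [<- <-]]|].
- by exists 0.
- by exists (x + y); [exact: SD | rewrite addr0].
- by exists (r *: x); [exact: SZ | rewrite mulr0].
- by move=> _ _ _ [x _ [_ <-]] [y _ [_ <-]].
Qed.

Definition graph_adjoin G y c : set (V * R) :=
  [set z | exists x a t, G (x, a) /\ z = (x + t *: y, a + t * c)].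

Lemma graph_adjoin_sub G y c : G `<=` graph_adjoin G y c.
Proof. by move=> [x a] Gxa; exists x, a, 0; rewrite scale0r mul0r !addr0. Qed.

Lemma graph_adjoin_new G y c : G (0, 0) -> graph_adjoin G y c (y, c).
Proof. by move=> G00; exists 0, 0, 1; rewrite scale1r mul1r !add0r. Qed.

Lemma linear_graph_adjoin G y c : linear_graph G -> ~ (exists a, G (y, a)) ->
  linear_graph (graph_adjoin G y c).
Proof.
move=> lG Gy; have [G00 GD GZ Gfun] := lG; split.
- exact: graph_adjoin_sub.
- move=> _ _ _ _ [x [a [t [Gxa [-> ->]]]]] [x' [a' [t' [Gxa' [-> ->]]]]].
  exists (x + x'), (a + a'), (t + t'); split; first exact: GD.
  by rewrite scalerDl mulrDl; congr (_, _); rewrite addrACA.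
- move=> r _ _ [x [a [t [Gxa [-> ->]]]]]; exists (r *: x), (r * a), (r * t).
  by rewrite scalerDr mulrDr scalerA mulrA; split => //; exact: GZ.
- move=> _ _ _ [x [a [t [Gxa [-> ->]]]]] [x' [a' [t' [Gxa' [exx' ->]]]]].
  have tt' : t = t'.
    apply: contrapT => /eqP; rewrite -subr_eq0 => ntt; apply: Gy.
    (* [x + t y = x' + t' y] puts [y] in the domain of [G] unless [t = t'] *)
    exists ((t - t')^-1 * (a' - a)); rewrite -[y](scalerK ntt).
    have -> : (t - t') *: y = x' - x.
      by apply/eqP; rewrite scalerBl subr_eq addrAC -exx' addrAC subrr add0r.
    exact: GZ (linear_graphB lG Gxa' Gxa).
  move: exx'; rewrite tt' => /addIr xx'; rewrite xx' in Gxa.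
  by rewrite (Gfun _ _ _ Gxa Gxa').
Qed.

End LinearGraph.

Section HahnBanach.
Variables (R : realType) (V : lmodType R) (p : V -> R).
Hypothesis p_subadd : forall x y, p (x + y) <= p x + p y.
Hypothesis p_scale : forall r x, 0 <= r -> p (r *: x) = r * p x.
Implicit Types (G : set (V * R)) (x y : V) (a b c r t : R).

Definition dominated G := forall x a, G (x, a) -> a <= p x.

Lemma adjoin_value_bounds G y : linear_graph G -> dominated G ->
  exists c, (forall x a, G (x, a) -> a - p (x - y) <= c) /\
            (forall x a, G (x, a) -> c <= p (x + y) - a).
Proof.
move=> [G00 GD _ _] Gp.
have lo_hi x a x' a' : G (x, a) -> G (x', a') -> a - p (x - y) <= p (x' + y) - a'.
  move=> Gxa Gxa'; have := Gp _ _ (GD _ _ _ _ Gxa Gxa').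
  have := p_subadd (x - y) (x' + y); rewrite addrACA addNr addr0; lra.
pose E := [set d | exists x a, G (x, a) /\ d = a - p (x - y)].
exists (sup E); split.
- move=> x a Gxa; apply: ub_le_sup; last by exists x, a.
  by exists (p (0 + y) - 0) => _ [x' [a' [Gxa' ->]]]; exact: lo_hi.
- move=> x a Gxa; apply: ge_sup; first by exists (0 - p (0 - y)), 0, 0.
  by move=> _ [x' [a' [Gxa' ->]]]; exact: lo_hi.
Qed.

Lemma dominated_adjoin G y c : linear_graph G -> dominated G ->
  (forall x a, G (x, a) -> a - p (x - y) <= c) ->
  (forall x a, G (x, a) -> c <= p (x + y) - a) ->
  dominated (graph_adjoin G y c).
Proof.
move=> [_ _ GZ _] Gp lo hi _ _ [x [a [t [Gxa [-> ->]]]]].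
(* rescale by [|t|] to reduce to the two bounds on [c] *)
have rescale s z : 0 < s -> s * p (s^-1 *: x + z) = p (x + s *: z).
  move=> s0; rewrite -p_scale ?ltW // scalerDr scalerA mulfV ?gt_eqF //.
  by rewrite scale1r.
have Gs s : G (s^-1 *: x, s^-1 * a) by exact: GZ.
have [t0|t0|->] := ltgtP t 0; last by rewrite mul0r scale0r !addr0; exact: Gp.
- have s0 : 0 < - t by rewrite oppr_gt0.
  have := lo _ _ (Gs (- t)); rewrite -(ler_pM2l s0) mulrBr mulrA mulfV ?gt_eqF //.
  by rewrite mul1r rescale // scaleNr -scalerN opprK; lra.
- have := hi _ _ (Gs t); rewrite -(ler_pM2l t0) mulrBr rescale //.
  by rewrite mulrA mulfV ?gt_eqF // mul1r; lra.
Qed.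

Lemma maximal_dominated_graph G0 : linear_graph G0 -> dominated G0 ->
  exists2 G, [/\ linear_graph G, dominated G & G0 `<=` G] &
    forall G', linear_graph G' -> dominated G' -> G `<=` G' -> G' `<=` G.
Proof.
move=> lG0 dG0.
pose admissible G := [/\ linear_graph G, dominated G & G0 `<=` G].
pose T := {G | admissible G}.
pose le (s t : T) := `[< sval s `<=` sval t >].
have chain_ub (F : set T) : total_on F le -> exists u, forall s, F s -> le s u.
  move=> Ftot; have [->|/set0P [s0 Fs0]] := eqVneq F set0.
    by exists (exist _ G0 (And3 lG0 dG0 (@subset_refl _ G0))).
  have Ftot' : total_on (sval @` F) subset.
    move=> _ _ [s Fs <-] [s' Fs' <-].
    by case: (Ftot _ _ Fs Fs') => /asboolP; [left|right].
  have aU : admissible (\bigcup_(G in sval @` F) G).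
    split.
    - apply: linear_graph_bigcup => //; first by exists (sval s0), s0.
      by move=> _ [s _ <-]; have [] := svalP s.
    - by move=> x a [_ [s _ <-] Gxa]; have [_ dG _] := svalP s; exact: dG.
    - by move=> z G0z; exists (sval s0); [exists s0|have [_ _] := svalP s0; exact].
  by exists (exist _ _ aU) => s Fs; apply/asboolP => z sz; exists (sval s); [exists s|].
have [[G aG] Gmax] := @ZL_preorder T (exist _ G0 (And3 lG0 dG0 (@subset_refl _ G0))) le
  (fun u => asboolT (@subset_refl _ _))
  (fun u v w uv vw => asboolT (subset_trans (asboolW uv) (asboolW vw))) chain_ub.
exists G => // G' lG' dG' GG'; have [_ _ G0G] := aG.
have aG' : admissible G' by split => //; exact: subset_trans GG'.
exact: asboolW (Gmax (exist _ G' aG') (asboolT GG')).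
Qed.

Theorem hahn_banach G0 : linear_graph G0 -> dominated G0 ->
  exists g : V -> R, [/\ forall r x y, g (r *: x + y) = r * g x + g y,
    forall x, g x <= p x & forall x a, G0 (x, a) -> g x = a].
Proof.
move=> lG0 dG0; have [G [lG dG G0G] Gmax] := maximal_dominated_graph lG0 dG0.
have [G00 GD GZ Gfun] := lG.
have Gtotal x : exists a, G (x, a).
  apply: contrapT => Gx; have [c [lo hi]] := adjoin_value_bounds x lG dG.
  have GcG := Gmax _ (linear_graph_adjoin c lG Gx) (dominated_adjoin lG dG lo hi)
    (@graph_adjoin_sub _ _ G x c).
  by apply: Gx; exists c; apply: GcG; exact: graph_adjoin_new.
pose g x := xget 0 [set a | G (x, a)].
have Gg x : G (x, g x) := xgetPex 0 (Gtotal x).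
exists g; split => [r x y|x|x a /G0G Gxa].
- exact: Gfun (Gg _) (GD _ _ _ _ (GZ r _ _ (Gg x)) (Gg y)).
- exact: dG (Gg x).
- exact: Gfun (Gg x) Gxa.
Qed.

Lemma dominated_norm_le (g : V -> R) :
  (forall r x y, g (r *: x + y) = r * g x + g y) -> (forall x, g x <= p x) ->
  (forall x, p (- x) = p x) -> forall x, `|g x| <= p x.
Proof.
move=> g_lin g_le pN x.
have g0 : g 0 = 0 by have := g_lin 1 0 0; rewrite scale1r addr0 mul1r; lra.
have gN : g (- x) = - g x.
  by have := g_lin (-1) x 0; rewrite scaleN1r addr0 g0 addr0 mulN1r.
by rewrite ler_norml g_le andbT lerNl -gN -pN g_le.
Qed.

End HahnBanach.

Section RealComplex.
Variable R : realType.
Local Open Scope complex_scope.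

Lemma real_complexD (a b : R) : (a + b)%:C = a%:C + b%:C :> R[i].
Proof. exact: rmorphD. Qed.

Lemma real_complexN (a : R) : (- a)%:C = - a%:C :> R[i].
Proof. exact: rmorphN. Qed.

Lemma real_complexM (a b : R) : (a * b)%:C = a%:C * b%:C :> R[i].
Proof. exact: rmorphM. Qed.

Lemma norm_i : `|'i| = 1 :> R[i].
Proof. by rewrite normc_def /= expr0n expr1n /= add0r sqrtr1. Qed.

Lemma norm_real_complex (a : R) : `|a%:C| = `|a|%:C :> R[i].
Proof. by rewrite normc_def /= expr0n /= addr0 sqrtr_sqr. Qed.

End RealComplex.

Section Realify.
Variables (R : realType) (V : lmodType R[i]).

Definition realify : Type := V.
HB.instance Definition _ := GRing.Zmodule.on realify.

Definition real_scale (r : R) (x : realify) : realify := (r%:C)%C *: (x : V).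

Lemma real_scaleA r s x : real_scale r (real_scale s x) = real_scale (r * s) x.
Proof. by rewrite /real_scale scalerA -rmorphM. Qed.

Lemma real_scale1 : left_id 1 real_scale.
Proof. by move=> x; rewrite /real_scale rmorph1 scale1r. Qed.

Lemma real_scaleDr : right_distributive real_scale +%R.
Proof. by move=> r x y; rewrite /real_scale scalerDr. Qed.

Lemma real_scaleDl x : {morph real_scale^~ x : r s / r + s}.
Proof. by move=> r s; rewrite /real_scale rmorphD scalerDl. Qed.

HB.instance Definition _ := GRing.Zmodule_isLmodule.Build R realify
  real_scaleA real_scale1 real_scaleDr real_scaleDl.

End Realify.

Section Complexify.
Variables (R : realType) (V : lmodType R[i]) (g : realify V -> R).
Hypothesis g_lin : forall r (x y : realify V), g (r *: x + y) = r * g x + g y.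

Definition complexify (x : V) : R[i] := ((g x)%:C - 'i * (g ('i *: x))%:C)%C.

Lemma Re_complexify x : complex.Re (complexify x) = g x.
Proof. by rewrite /complexify /= !mul0r !mul1r subr0 oppr0 addr0. Qed.

Lemma complexify_linear (k : R[i]) x y :
  complexify (k *: x + y) = k * complexify x + complexify y.
Proof.
have gD x' y' : g (x' + y') = g x' + g y'.
  by have := g_lin 1 x' y'; rewrite scale1r mul1r.
have g0 : g 0 = 0 by have := gD 0 0; rewrite addr0; lra.
have gZ r x' : g ((r%:C)%C *: x') = r * g x'.
  by have := g_lin r x' 0; rewrite addr0 g0 addr0; apply.
have cD x' y' : complexify (x' + y') = complexify x' + complexify y'.
  by rewrite /complexify scalerDr !gD !real_complexD; ring.
have cZ r x' : complexify ((r%:C)%C *: x') = (r%:C)%C * complexify x'.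
  by rewrite /complexify scalerA (mulrC 'i%C (r%:C)%C) -scalerA !gZ !real_complexM; ring.
have cI x' : complexify ('i%C *: x') = 'i%C * complexify x'.
  have gN z : g (- z) = - g z by have := gZ (-1) z; rewrite rmorphN1 scaleN1r mulN1r.
  rewrite /complexify scalerA -expr2 sqr_i scaleN1r gN real_complexN.
  by rewrite mulrBr mulrA -expr2 sqr_i mulN1r mulrN !opprK addrC.
rewrite cD [k]complexE scalerDl -scalerA cD cZ cI cZ; ring.
Qed.

Lemma norm_complexify_le x :
  `|complexify x| <= ((`|g x| + `|g ('i *: x)|)%:C)%C.
Proof.
apply: le_trans (ler_normB _ _) _.
by rewrite normrM !norm_real_complex norm_i mul1r real_complexD.
Qed.

End Complexify.

Section ContinuousFunctional.
Variables (R : realType) (V : normedModType R[i]) (f : V -> (R[i])^o).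
Hypothesis f_lin : forall (k : R[i]) x y, f (k *: x + y) = k * f x + f y.

Let fL : {linear V -> (R[i])^o} := HB.pack f (GRing.isLinear.Build _ _ _ _ f f_lin).

Lemma cont_lin_functionalP :
  cont_lin_functional f <-> exists2 M : R[i], 0 <= M & forall x, `|f x| <= M * `|x|.
Proof.
split=> [[_ /(linear_bounded_continuous fL)/linear_boundedP [M [Mreal HM]]]|[M M0 HM]].
  exists (`|M| + 1) => [|x]; first by rewrite addr_ge0.
  by apply: HM; rewrite (le_lt_trans (real_ler_norm Mreal)) // ltrDl.
split=> //; apply/(linear_bounded_continuous fL)/linear_boundedP.
exists M; split=> [|r Mr x]; first exact: ger0_real.
exact: le_trans (HM x) (ler_wpM2r (normr_ge0 _) (ltW Mr)).
Qed.

End ContinuousFunctional.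

Section ScaledNorm.
Variables (R : realType) (V : normedModType R[i]) (r : R).
Hypothesis r_gt0 : 0 < r.

Lemma normr_Re (x : V) : `|x| = ((complex.Re `|x|)%:C)%C.
Proof. by rewrite RRe_real // normr_real. Qed.

Definition scaled_norm (x : realify V) : R := complex.Re `|x : V| / r.

Lemma scaled_norm_ge0 x : 0 <= scaled_norm x.
Proof. by apply: divr_ge0; [rewrite -ler0c -normr_Re | exact: ltW]. Qed.

Lemma ler_scaled_normD x y : scaled_norm (x + y) <= scaled_norm x + scaled_norm y.
Proof.
by rewrite -mulrDl ler_pM2r ?invr_gt0 // -lecR real_complexD -!normr_Re ler_normD.
Qed.

Lemma scaled_normZ s x : 0 <= s -> scaled_norm (s *: x) = s * scaled_norm x.
Proof.
move=> s0; rewrite /scaled_norm mulrA; congr (_ / r); apply: complexI.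
by rewrite real_complexM -!normr_Re [LHS]normrZ norm_real_complex ger0_norm.
Qed.

Lemma scaled_normN x : scaled_norm (- x) = scaled_norm x.
Proof. by rewrite /scaled_norm normrN. Qed.

Lemma scaled_normZi (x : V) : scaled_norm ('i%C *: x) = scaled_norm x.
Proof. by rewrite /scaled_norm normrZ norm_i mul1r. Qed.

Lemma scaled_norm_Re (x : V) : `|x| = ((r * scaled_norm x)%:C)%C.
Proof. by rewrite /scaled_norm mulrCA mulfV ?gt_eqF // mulr1 -normr_Re. Qed.

End ScaledNorm.

Section Separation.
Variables (R : realType) (V : normedModType R[i]).

Lemma separating_functional (S : set V) (x0 : V) (e : R[i]) : 0 < e -> S 0 ->
  (forall x y, S x -> S y -> S (x + y)) -> (forall (k : R[i]) x, S x -> S (k *: x)) ->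
  (forall z, S z -> e <= `|x0 - z|) ->
  exists F : V -> (R[i])^o,
    [/\ cont_lin_functional F, forall z, S z -> F z = 0 & F x0 != 0].
Proof.
move=> e0 S0 SD SZ Sfar.
pose r := complex.Re e.
have er : e = (r%:C)%C by rewrite RRe_real // gtr0_real.
have r0 : 0 < r by rewrite -ltcR -er.
pose p := @scaled_norm R V r.
have p_subadd := @ler_scaled_normD R V r r0.
have p_scale := @scaled_normZ R V r.
pose GS : set (realify V * R) := [set (z, 0) | z in S].
have lGS : linear_graph GS by apply: linear_graph_zero => // s x; exact: SZ.
have x0GS : ~ (exists a, GS (x0, a)).
  move=> [a [z /Sfar + [zx0 _]]]; rewrite zx0 subrr normr0.
  by move=> /(lt_le_trans e0); rewrite ltxx.
have dG0 : dominated p (graph_adjoin GS x0 1).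
  apply: dominated_adjoin => // [x a [z _ [_ <-]]|x a [z _ [_ <-]]|x a [z Sz [<- <-]]].
  - exact: scaled_norm_ge0.
  - by rewrite sub0r lerNl (le_trans _ (scaled_norm_ge0 r0 _)) ?lerN10 ?ltW.
  - rewrite subr0 -(ler_pM2l r0) mulr1 -lecR -er -(scaled_norm_Re r0).
    by have := Sfar _ (SZ (-1) _ Sz); rewrite scaleN1r opprK addrC.
have [g [g_lin g_le g_G0]] := hahn_banach p_subadd p_scale
  (linear_graph_adjoin 1 lGS x0GS) dG0.
have g_abs := dominated_norm_le g_lin g_le (@scaled_normN R V r).
have gS z : S z -> g z = 0.
  by move=> Sz; apply: (g_G0 z 0); apply: graph_adjoin_sub; exists z.
have gx0 : g x0 = 1.
  by apply: (g_G0 x0 1); apply: graph_adjoin_new; exists 0.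
exists (complexify g); split.
- apply/(cont_lin_functionalP (complexify_linear g_lin)).
  exists (((2 / r)%:C)%C) => [|x]; first by rewrite ler0c divr_ge0 ?ltW.
  apply: le_trans (norm_complexify_le g x) _.
  rewrite [`|x|](scaled_norm_Re r0) -real_complexM lecR mulrA divfK ?gt_eqF //.
  by rewrite mulr_natl mulr2n lerD ?g_abs // -(scaled_normZi r x) g_abs.
- move=> z Sz; rewrite /complexify !gS ?mulr0 ?subr0 //; exact: SZ.
- apply/eqP => F0; have := Re_complexify g x0; rewrite F0 gx0 /=.
  by move=> /eqP; rewrite eq_sym oner_eq0.
Qed.
End Separation.

Section LinearSpan.
Variables (R : realType) (V : lmodType R[i]) (P : set V).

Lemma lin_span0 : lin_span P 0.
Proof. by exists 0%N, (fun _ => 0), (fun _ => 0); split=> [[]//|]; rewrite big_ord0. Qed.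

Lemma lin_spanD x y : lin_span P x -> lin_span P y -> lin_span P (x + y).
Proof.
move=> [n [c [v [Pv ->]]]] [m [c' [v' [Pv' ->]]]].
pose cat_fun T (u : 'I_n -> T) (u' : 'I_m -> T) (i : 'I_(n + m)) :=
  match fintype.split i with inl j => u j | inr j => u' j end.
exists (n + m)%N, (cat_fun _ c c'), (cat_fun _ v v'); split.
  by move=> i; rewrite /cat_fun; case: fintype.split.
rewrite big_split_ord /=; congr (_ + _); apply: eq_bigr => j _.
  by rewrite /cat_fun (unsplitK (inl j)).
by rewrite /cat_fun (unsplitK (inr j)).
Qed.

Lemma lin_spanZ (k : R[i]) x : lin_span P x -> lin_span P (k *: x).
Proof.
move=> [n [c [v [Pv ->]]]]; exists n, (fun i => k * c i), v; split => //.
by rewrite scaler_sumr; apply: eq_bigr => i _; rewrite scalerA.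
Qed.

Lemma sub_lin_span : P `<=` lin_span P.
Proof.
by move=> x Px; exists 1%N, (fun _ => 1), (fun _ => x); rewrite big_ord1 scale1r.
Qed.

End LinearSpan.

Section SuperWeakAmenability.
Variables (R : realType) (A : banachAlgebra R).

Lemma cont_hom_id : cont_hom (fun a : A => a).
Proof. by split=> // a; exact: cvg_id. Qed.

Lemma rank_one_dual_derivation (f h : A -> (R[i])^o) :
  cont_lin_functional f -> cont_lin_functional h ->
  (forall a b x, f (ba_mul A a b) * h x =
     f a * h (ba_mul A b x) + f b * h (ba_mul A x a)) ->
  dual_derivation (fun a : A => a) (fun a x => f a * h x).
Proof.
move=> fc hc Leibniz.
have [Mf Mf0 fM] := (cont_lin_functionalP fc.1).1 fc.
have [Mh Mh0 hM] := (cont_lin_functionalP hc.1).1 hc.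
split=> [a|k a a' x||]; last exact: Leibniz.
- have fh_lin k x y : f a * h (k *: x + y) = k * (f a * h x) + f a * h y.
    by rewrite hc.1 mulrDr mulrCA.
  apply/(cont_lin_functionalP fh_lin); exists (`|f a| * Mh) => [|x].
    by rewrite mulr_ge0.
  by rewrite normrM -mulrA ler_wpM2l.
- by rewrite fc.1 mulrDl mulrA.
- exists (Mf * Mh) => a x; rewrite normrM.
  apply: le_trans (ler_pM (normr_ge0 _) (normr_ge0 _) (fM a) (hM x)) _.
  by rewrite mulrACA mulrA.
Qed.

Section RankOne.
Variables (f h : A -> (R[i])^o).
Hypotheses (swa : super_weakly_amenable A)
  (fc : cont_lin_functional f) (hc : cont_lin_functional h)
  (Leibniz : forall a b x, f (ba_mul A a b) * h x =
     f a * h (ba_mul A b x) + f b * h (ba_mul A x a)).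

Lemma swa_rank_one a b : f a * h b + f b * h a = 0.
Proof. exact: swa cont_hom_id (rank_one_dual_derivation fc hc Leibniz) a b. Qed.

Lemma swa_rank_one_diag a : f a * h a = 0.
Proof. by have /eqP := swa_rank_one a a; rewrite -mulr2n mulrn_eq0 => /eqP. Qed.

End RankOne.

Lemma swa_dense_span_products : super_weakly_amenable A ->
  closure (lin_span (ba_products A)) = [set: A].
Proof.
move=> swa; apply/seteqP; split=> // x0 _ B /nbhs_normP [e /= e0 eB].
apply: contrapT => noS.
have far z : lin_span (ba_products A) z -> e <= `|x0 - z|.
  move=> Sz; rewrite real_leNgt ?normr_real ?gtr0_real //.
  by apply/negP => ltz; apply: noS; exists z; split=> //; exact: eB.
have [F [Fc FS Fx0]] := separating_functional e0 (lin_span0 _)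
  (@lin_spanD _ _ _) (@lin_spanZ _ _ _) far.
have Fprod a b : F (ba_mul A a b) = 0.
  by apply: FS; apply: sub_lin_span; exists a, b.
have Leibniz a b x : F (ba_mul A a b) * F x =
    F a * F (ba_mul A b x) + F b * F (ba_mul A x a).
  by rewrite !Fprod mul0r !mulr0 addr0.
by move/eqP: (swa_rank_one_diag swa Fc Fc Leibniz x0); rewrite mulf_eq0 orbb (negbTE Fx0).
Qed.

Lemma swa_no_point_derivation (phi : A -> (R[i])^o) (d : A -> (R[i])^o) :
  super_weakly_amenable A -> character phi -> cont_lin_functional d ->
  (forall a b, d (ba_mul A a b) = d a * phi b + phi a * d b) ->
  forall a, d a = 0.
Proof.
move=> swa [phic phiM [a0 phia0]] dc dL.
have Leibniz a b x : d (ba_mul A a b) * phi x =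
    d a * phi (ba_mul A b x) + d b * phi (ba_mul A x a).
  by rewrite dL !phiM; ring.
have da0 : d a0 = 0.
  by apply/eqP; move/eqP: (swa_rank_one_diag swa dc phic Leibniz a0); rewrite mulf_eq0 (negbTE phia0) orbF.
move=> a; apply/eqP; move/eqP: (swa_rank_one swa dc phic Leibniz a a0).
by rewrite da0 mul0r addr0 mulf_eq0 (negbTE phia0) orbF.
Qed.

End SuperWeakAmenability.

Theorem theorem3p2 (R : realType) (A : banachAlgebra R) :
  super_weakly_amenable A ->
  closure (lin_span (ba_products A)) = [set: ba_sort A] /\
  (forall phi : A -> (R[i])^o, character phi ->
   forall d : A -> (R[i])^o, cont_lin_functional d ->
   (forall a b : A, d (ba_mul A a b) = d a * phi b + phi a * d b) ->
   forall a : A, d a = 0).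
Proof.
move=> swa; split; first exact: swa_dense_span_products.
by move=> phi phic d dc dL; apply: (swa_no_point_derivation swa phic dc dL).
Qed.
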